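(* Let $n\ge2$ and $\rho=\sum_{i=0}^n\lambda_i|D_n^i\rangle\langle D_n^i|$ with $\lambda_i\ge0$, $\sum_i\lambda_i=1$. Then $L(\rho)=n$ if and only if at least one of the following holds: (i) $\lambda_0\lambda_n\neq0$; (ii) $\lambda_i\neq0$ for every odd $i\in\{0,\dots,n\}$; (iii) $\lambda_i\ne0$ for every even $i\in\{0,\dots,n\}$.
   Context: Dicke states: $|D_n^i\rangle=\binom{n}{i}^{-1/2}\sum_{s\in\{0,1\}^n,\ \sum_js_j=i}|s_1\rangle\otimes\cdots\otimes|s_n\rangle$. For $S\subseteq[n]$, $\rho_S$ is the partial trace of $\rho$ over qubits outside $S$; $\mathcal C(\rho,\mathcal S)=\{\sigma\text{ density matrix}:\sigma_S=\rho_S\ \forall S\in\mathcal S\}$; $\mathcal S$ determines $\rho$ if $\mathcal C(\rho,\mathcal S)=\{\rho\}$; $L(\rho)=\min_{\mathcal S\text{ determines }\rho}\max_{S\in\mathcal S}|S|$. *)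

From HB Require Import structures.
From mathcomp Require Import all_boot all_order all_algebra.
Set Implicit Arguments. Unset Strict Implicit. Unset Printing Implicit Defensive.
Import Order.TTheory GRing.Theory Num.Theory.
Local Open Scope ring_scope.

Section Defs.
Variable C : numClosedFieldType.

(* computational basis of a finite system labelled by a finType I;
   an operator is its matrix in that basis *)
Definition op (I : finType) := I -> I -> C.

Definition op_eq (I : finType) (A B : op I) : Prop := forall x y, A x y = B x y.

Definition hermitian (I : finType) (A : op I) : Prop :=
  forall x y, A y x = (A x y)^*.

Definition psd (I : finType) (A : op I) : Prop :=
  forall v : I -> C, 0 <= \sum_x \sum_y (v x)^* * A x y * v y.

Definition density (I : finType) (A : op I) : Prop :=
  [/\ hermitian A, psd A & \sum_x A x x = 1].

(* n qubits: basis states |s_1 ... s_n>, s : 'I_n -> bool *)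
Definition BS (n : nat) := {ffun 'I_n -> bool}.

Definition sub_in (n : nat) (S : {set 'I_n}) := {i : 'I_n | i \in S}.
Definition sub_out (n : nat) (S : {set 'I_n}) := {i : 'I_n | i \in ~: S}.
Definition cfg_in (n : nat) (S : {set 'I_n}) := {ffun sub_in S -> bool}.
Definition cfg_out (n : nat) (S : {set 'I_n}) := {ffun sub_out S -> bool}.

Definition glue (n : nat) (S : {set 'I_n}) (a : cfg_in S) (c : cfg_out S) : BS n :=
  [ffun i : 'I_n =>
     if @insub _ (fun j => j \in S) (sub_in S) i is Some j then a j
     else if @insub _ (fun j => j \in ~: S) (sub_out S) i is Some k then c k
     else false].

Definition ptrace (n : nat) (S : {set 'I_n}) (A : op (BS n)) : op (cfg_in S) :=
  fun a b => \sum_(c : cfg_out S) A (glue a c) (glue b c).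

Arguments ptrace [n] S A _ _.

Definition determines (n : nat) (rho : op (BS n)) (Sc : {set {set 'I_n}}) : Prop :=
  forall sigma : op (BS n), density sigma ->
    (forall S, S \in Sc -> op_eq (ptrace S sigma) (ptrace S rho)) ->
    op_eq sigma rho.

Definition maxsize (n : nat) (Sc : {set {set 'I_n}}) : nat := \max_(S in Sc) #|S|.

Definition is_L (n : nat) (rho : op (BS n)) (k : nat) : Prop :=
  (exists Sc, determines rho Sc /\ maxsize Sc = k) /\
  (forall Sc, determines rho Sc -> (k <= maxsize Sc)%N).

Definition wt (n : nat) (s : BS n) : nat := #|[set i | s i]|.

Definition dicke (n i : nat) (s : BS n) : C :=
  if wt s == i then (sqrtC ('C(n, i))%:R)^-1 else 0.

Definition dicke_mix (n : nat) (lam : 'I_n.+1 -> C) : op (BS n) :=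
  fun x y => \sum_(i < n.+1) lam i * (dicke i x * (dicke i y)^*).

End Defs.

From Pilot Require Import Defs.
From HB Require Import structures.
From mathcomp Require Import all_boot all_order all_algebra all_fingroup.
From mathcomp Require Import ring zify.
Set Implicit Arguments. Unset Strict Implicit. Unset Printing Implicit Defensive.
Import Order.TTheory GRing.Theory Num.Theory.
Local Open Scope ring_scope.

(* An operator [X] that changes sign when bit [q] of both indices is flipped has
   vanishing marginal on every set of qubits missing [q]. So if some density matrix
   [sigma <> rho] differs from [rho] by an operator of this kind for every [q], no
   family of sets of fewer than [n] qubits determines [rho]. Under (i) take
   [sigma = rho + lam_0 lam_n (|0..0><1..1| + |1..1><0..0|)]; under (ii) or (iii) take
   [sigma = rho + t \sum_i (-1)^i C(n, i) |D_n^i><D_n^i|], again a Dicke mixture, whose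
   weights stay nonnegative for a small [t] of the right sign.
   Conversely, if all three conditions fail, the [(n-1)]-qubit marginals determine
   [rho]. If [sigma] has the same such marginals, [D = sigma - rho] changes sign
   under every single-bit flip, so [D x x = (-1)^(wt x) D 0 0]. Positivity of [sigma]
   at a weight of each parity where [rho] vanishes gives [D x x = 0]; positivity then
   kills the rows of [D] at weights where [lam] vanishes, and, comparing the pairs
   [x, x'] and [flip q x, flip q x'] for a third qubit [q], makes [D] invariant under
   swapping two unequal bits of its index. An induction on the number of bits that
   differ from a constant string [c] with [lam_(wt c) = 0] gives [D = 0]. *)

Section BitStrings.
Variable n : nat.
Implicit Types (x y : BS n) (p q r : 'I_n) (c : bool).

Definition const_bits c : BS n := [ffun => c].
Definition flip q x : BS n := [ffun i => if i == q then ~~ x i else x i].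
Definition swap_bits p r x : BS n := [ffun i => x (tperm p r i)].

Definition dist_const c x := #|[set i | x i != c]|.

Lemma flipK q : involutive (flip q).
Proof. by move=> x; apply/ffunP=> i; rewrite !ffunE; case: eqP => // _; rewrite negbK. Qed.

Lemma flip_at q x : flip q x q = ~~ x q.
Proof. by rewrite ffunE eqxx. Qed.

Lemma wt_le x : (wt x <= n)%N.
Proof. by rewrite /wt (leq_trans (max_card _)) // card_ord. Qed.

Lemma wt_gt0 q x : x q -> (0 < wt x)%N.
Proof. by move=> xq; rewrite /wt card_gt0; apply/set0Pn; exists q; rewrite inE. Qed.

Lemma wt_flip q x : wt (flip q x) = if x q then (wt x).-1 else (wt x).+1.
Proof.
rewrite /wt; case xq: (x q).
  have -> : [set i | flip q x i] = [set i | x i] :\ q.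
    by apply/setP=> i; rewrite !inE ffunE; case: eqP => [->|]; rewrite ?xq.
  by rewrite (cardsD1 q [set i | x i]) inE xq.
have -> : [set i | flip q x i] = q |: [set i | x i].
  by apply/setP=> i; rewrite !inE ffunE; case: eqP => [->|]; rewrite ?xq.
by rewrite cardsU1 inE xq.
Qed.

Lemma odd_wt_flip q x : odd (wt (flip q x)) = ~~ odd (wt x).
Proof.
rewrite wt_flip; case xq: (x q) => //=.
by move: (wt_gt0 xq); case: (wt x) => //= m _; rewrite negbK.
Qed.

Lemma eq_wt_flip q x y :
  x q = y q -> (wt (flip q x) == wt (flip q y)) = (wt x == wt y).
Proof.
move=> xy; rewrite !wt_flip -xy; case xq: (x q); last by rewrite eqSS.
have yq : y q by rewrite -xy xq.
by move: (wt_gt0 xq) (wt_gt0 yq); case: (wt x); case: (wt y).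
Qed.

Lemma wt_eq0 x : (wt x == 0%N) = (x == const_bits false).
Proof.
rewrite /wt cards_eq0; apply/eqP/eqP => [x0|->]; last first.
  by apply/setP=> i; rewrite !inE ffunE.
apply/ffunP=> i; rewrite ffunE; apply/negbTE/negP => xi.
by have := in_set0 i; rewrite -x0 inE xi.
Qed.

Lemma wt_eqn x : (wt x == n) = (x == const_bits true).
Proof.
have -> : (wt x == n) = ([set i | x i] == setT).
  by rewrite eqEcard subsetT cardsT card_ord eqn_leq wt_le.
apply/eqP/eqP => [xT|->]; last by apply/setP=> i; rewrite !inE ffunE.
by apply/ffunP=> i; rewrite ffunE; have := in_setT i; rewrite -xT inE.
Qed.

Lemma wt_const_bits c : wt (const_bits c) = if c then n else 0%N.
Proof. by case: c; apply/eqP; rewrite ?wt_eqn ?wt_eq0. Qed.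

Lemma wt_nonconst p r x : x p != x r -> (0 < wt x < n)%N.
Proof.
move=> xpr; rewrite lt0n ltn_neqAle wt_le wt_eq0 wt_eqn andbT.
by apply/andP; split; apply: contra xpr => /eqP->; rewrite !ffunE.
Qed.

Lemma card_wt k : #|[set x : BS n | wt x == k]| = 'C(n, k).
Proof.
pose ones x : {set 'I_n} := [set i | x i].
have ones_bij : bijective ones.
  exists (fun A : {set 'I_n} => [ffun i => i \in A]) => [x|A].
    by apply/ffunP=> i; rewrite ffunE inE.
  by apply/setP=> i; rewrite inE ffunE.
have -> : [set x : BS n | wt x == k] = ones @^-1: [set A : {set 'I_n} | #|A| == k].
  by apply/setP=> x; rewrite !inE.
by rewrite on_card_preimset ?card_draws ?card_ord //; apply: onW_bij.
Qed.

Lemma exists_wt k : (k <= n)%N -> exists x, wt x = k.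
Proof.
move=> kn; have : (0 < #|[set x : BS n | wt x == k]|)%N by rewrite card_wt bin_gt0.
by rewrite card_gt0 => /set0Pn[x]; rewrite inE => /eqP; exists x.
Qed.

Lemma swap_bits_at p r q x : q != p -> q != r -> swap_bits p r x q = x q.
Proof. by move=> qp qr; rewrite ffunE tpermD // eq_sym. Qed.

Lemma swap_bitsR p r x : swap_bits p r x r = x p.
Proof. by rewrite ffunE tpermR. Qed.

Lemma swap_bits_neq p r x : x p != x r -> swap_bits p r x != x.
Proof.
by move=> xpr; apply: contra xpr => /eqP/ffunP/(_ p); rewrite ffunE tpermL => ->.
Qed.

Lemma swap_bits_flip p r q x :
  q != p -> q != r -> swap_bits p r (flip q x) = flip q (swap_bits p r x).
Proof.
move=> qp qr; apply/ffunP=> i; rewrite !ffunE.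
have fixq : tperm p r q = q by rewrite tpermD // eq_sym.
suff -> : (tperm p r i == q) = (i == q) by [].
by rewrite -{1}fixq (inj_eq (@perm_inj _ (tperm p r))).
Qed.

Lemma card_swap_bits p r x (P : pred bool) :
  #|[set i | P (swap_bits p r x i)]| = #|[set i | P (x i)]|.
Proof.
have -> : [set i | P (swap_bits p r x i)] = tperm p r @^-1: [set i | P (x i)].
  by apply/setP=> i; rewrite !inE ffunE.
by rewrite card_preimset //; apply: perm_inj.
Qed.

Lemma wt_swap_bits p r x : wt (swap_bits p r x) = wt x.
Proof. exact: (card_swap_bits _ _ _ id). Qed.

Lemma dist_const_swap_bits c p r x : dist_const c (swap_bits p r x) = dist_const c x.
Proof. exact: (card_swap_bits _ _ _ (fun b => b != c)). Qed.

Lemma dist_const_gt0 c q x : x q != c -> (0 < dist_const c x)%N.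
Proof. by move=> xq; rewrite /dist_const card_gt0; apply/set0Pn; exists q; rewrite inE. Qed.

Lemma dist_const_flip c q x : x q != c -> dist_const c (flip q x) = (dist_const c x).-1.
Proof.
move=> xq; rewrite /dist_const.
have -> : [set i | flip q x i != c] = [set i | x i != c] :\ q.
  apply/setP=> i; rewrite !inE ffunE; case: (eqVneq i q) => [->|] //=.
  by move: xq; case: (x q); case: c.
by rewrite (cardsD1 q [set i | x i != c]) inE xq.
Qed.

Lemma const_bitsP c x : x = const_bits c \/ exists q, x q != c.
Proof.
case: (boolP [exists q, x q != c]) => [/existsP|]; first by right.
rewrite negb_exists => /forallP xc; left.
by apply/ffunP=> i; rewrite ffunE; apply/eqP; rewrite -[_ == _]negbK xc.
Qed.

Definition restr_in (S : {set 'I_n}) x : cfg_in S := [ffun j => x (val j)].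
Definition restr_out (S : {set 'I_n}) x : cfg_out S := [ffun j => x (val j)].
Definition flip_out (S : {set 'I_n}) q (c : cfg_out S) : cfg_out S :=
  [ffun k => if val k == q then ~~ c k else c k].

Lemma glue_in (S : {set 'I_n}) (a : cfg_in S) (c : cfg_out S) i (iS : i \in S) :
  glue a c i = a (exist _ i iS).
Proof. by rewrite /glue ffunE (insubT (fun j => j \in S) iS). Qed.

Lemma glue_out (S : {set 'I_n}) (a : cfg_in S) (c : cfg_out S) i (iS : i \in ~: S) :
  glue a c i = c (exist _ i iS).
Proof.
have iS' : i \notin S by rewrite inE in iS.
by rewrite /glue ffunE insubF ?(negbTE iS') // (insubT (fun j => j \in ~: S) iS).
Qed.

Lemma glue_restr (S : {set 'I_n}) x y :
  {in ~: S, x =1 y} -> glue (restr_in S x) (restr_out S y) = x.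
Proof.
move=> xy; apply/ffunP=> i; case: (boolP (i \in S)) => iS.
  by rewrite glue_in ffunE.
have iS' : i \in ~: S by rewrite inE.
by rewrite glue_out ffunE /= xy.
Qed.

Lemma flip_outK (S : {set 'I_n}) q : involutive (@flip_out S q).
Proof. by move=> c; apply/ffunP=> k; rewrite !ffunE; case: eqP => // _; rewrite negbK. Qed.

Lemma glue_flip_out (S : {set 'I_n}) q (a : cfg_in S) (c : cfg_out S) :
  q \notin S -> glue a (flip_out q c) = flip q (glue a c).
Proof.
move=> qS; apply/ffunP=> i; rewrite [RHS]ffunE; case: (boolP (i \in S)) => iS.
  by rewrite !glue_in; case: eqP => // iq; rewrite -iq iS in qS.
have iS' : i \in ~: S by rewrite inE.
by rewrite !glue_out ffunE.
Qed.

Lemma glue_at_out (S : {set 'I_n}) q (a b : cfg_in S) (c : cfg_out S) :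
  q \notin S -> glue a c q = glue b c q.
Proof.
move=> qS; have qS' : q \in ~: S by rewrite inE.
by rewrite !(glue_out _ _ qS').
Qed.

End BitStrings.

Lemma all_or_exists (T : finType) (P Q : pred T) :
  (forall i, P i -> Q i) \/ exists2 i, P i & ~~ Q i.
Proof.
have [/forallP PQ | /forallPn[i]] := boolP [forall i, P i ==> Q i].
  by left=> i; apply/implyP.
by rewrite negb_imply => /andP[Pi nQi]; right; exists i.
Qed.

Lemma sum_involution_opp (R : numDomainType) (T : finType) (g : T -> T) (F : T -> R) :
  involutive g -> (forall x, F (g x) = - F x) -> \sum_x F x = 0.
Proof.
move=> gK Fg; have /eqP : \sum_x F x = - \sum_x F x.
  by rewrite {1}(reindex_inj (can_inj gK)) -sumrN; apply: eq_bigr => x _; rewrite Fg.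
by rewrite -subr_eq0 opprK -mulr2n -mulr_natr mulf_eq0 pnatr_eq0 orbF => /eqP.
Qed.

Section QuadraticForms.
Variables (C : numClosedFieldType) (I : finType).
Implicit Types (A : op C I) (u v : I -> C).

Definition qform A u v := \sum_a \sum_b (u a)^* * A a b * v b.

Lemma sum_mul_delta (F : I -> C) y : \sum_b F b * (b == y)%:R = F y.
Proof.
by rewrite (bigD1 y) //= eqxx mulr1 big1 ?addr0 // => b /negbTE->; rewrite mulr0.
Qed.

Lemma qform_delta A y : qform A (fun z => (z == y)%:R) (fun z => (z == y)%:R) = A y y.
Proof.
rewrite /qform (eq_bigr (fun a => A a y * (a == y)%:R)) ?sum_mul_delta // => a _.
by rewrite -sum_mul_delta mulr_suml; apply: eq_bigr => b _; rewrite conjC_nat; ring.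
Qed.

Lemma qform_add_delta A u s y :
  qform A (fun z => u z + s * (z == y)%:R) (fun z => u z + s * (z == y)%:R) =
  qform A u u + s * \sum_a (u a)^* * A a y + s^* * \sum_b A y b * u b
    + s^* * s * A y y.
Proof.
rewrite /qform.
transitivity (\sum_a \sum_b ((u a)^* * A a b * u b
    + (s * ((u a)^* * A a b)) * (b == y)%:R + (s^* * (A a b * u b) * (a == y)%:R)
    + (s^* * s * A a b * (a == y)%:R) * (b == y)%:R)).
  by apply: eq_bigr => a _; apply: eq_bigr => b _; rewrite rmorphD rmorphM /= conjC_nat; ring.
under eq_bigr do rewrite !big_split /=.
rewrite !big_split /=; congr (_ + _ + _ + _).
- by rewrite mulr_sumr; apply: eq_bigr => a _; rewrite sum_mul_delta.
- by under eq_bigr do rewrite -mulr_suml; rewrite sum_mul_delta mulr_sumr.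
- by under eq_bigr do rewrite sum_mul_delta; rewrite sum_mul_delta.
Qed.

Lemma psd_diag A y : psd A -> 0 <= A y y.
Proof. by move=> /(_ (fun z => (z == y)%:R)); rewrite -/(qform _ _ _) qform_delta. Qed.

(* Perturbing [v] by [- (c / d)] along [y], with [c = (A v)_y] and [d = A y y + 1],
   makes the form equal to [- |c|^2 (A y y + 2) / d^2]. *)
Lemma psd_qform_eq0 A v : Defs.hermitian A -> psd A -> qform A v v = 0 ->
  forall y, \sum_b A y b * v b = 0.
Proof.
move=> hA pA v0 y; set c := \sum_b A y b * v b.
have cc : \sum_a (v a)^* * A a y = c^*.
  by rewrite /c rmorph_sum; apply: eq_bigr => a _; rewrite rmorphM /= (hA y a) mulrC.
have Ayy := psd_diag y pA.
set d := A y y + 1.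
have d_gt0 : 0 < d by rewrite /d ltr_wpDl.
have dd : d^* = d by rewrite geC0_conj // ltW.
have := pA (fun z => v z + (- (c / d)) * (z == y)%:R).
rewrite -/(qform _ _ _) qform_add_delta v0 cc -/c rmorphN /= fmorph_div /= dd.
have -> : 0 + - (c / d) * c^* + - (c^* / d) * c + - (c^* / d) * - (c / d) * A y y
    = - ((c * c^*) * ((A y y + 2) / (d * d))).
  by rewrite /d; field; rewrite -/d gt_eqF.
have w_gt0 : 0 < (A y y + 2) / (d * d) by rewrite divr_gt0 ?mulr_gt0 // ltr_wpDl.
rewrite oppr_ge0 pmulr_lle0 // => cc_le0.
by apply/eqP; rewrite -mul_conjC_eq0 eq_le cc_le0 mul_conjC_ge0.
Qed.

Lemma qform_diff A x x' : x != x' ->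
  qform A (fun z => (z == x)%:R - (z == x')%:R) (fun z => (z == x)%:R - (z == x')%:R)
  = A x x + A x' x' - A x x' - A x' x.
Proof.
move=> xx'; rewrite /qform.
transitivity (\sum_a ((a == x)%:R - (a == x')%:R) * (A a x - A a x')).
  apply: eq_bigr => a _; rewrite rmorphB /= !conjC_nat.
  under eq_bigr do rewrite -mulrA; rewrite -mulr_sumr; congr (_ * _).
  by under eq_bigr do rewrite mulrBr; rewrite sumrB !sum_mul_delta.
under eq_bigr do rewrite mulrC mulrBr.
rewrite sumrB !sum_mul_delta; ring.
Qed.

Lemma qform_add_scale A B t u :
  qform (fun x y => A x y + t * B x y) u u = qform A u u + t * qform B u u.
Proof.
rewrite /qform mulr_sumr -big_split; apply: eq_bigr => a _ /=.
by rewrite mulr_sumr -big_split; apply: eq_bigr => b _ /=; ring.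
Qed.

End QuadraticForms.

Section DickeMixtures.
Variables (C : numClosedFieldType) (n : nat).
Implicit Types (x y : BS n) (lam : 'I_n.+1 -> C).

Lemma binomial_neq0 i : (i <= n)%N -> ('C(n, i)%:R : C) != 0.
Proof. by move=> i_le_n; rewrite pnatr_eq0 -lt0n bin_gt0. Qed.

Lemma dicke_mul_conj i x y : dicke C i x * (dicke C i y)^* =
  if (wt x == i) && (wt y == i) then ('C(n, i)%:R)^-1 else 0.
Proof.
rewrite /dicke; case: eqP => _; case: eqP => _ /=; rewrite ?mul0r ?conjC0 ?mulr0 //.
have s_ge0 : 0 <= sqrtC ('C(n, i)%:R : C) by rewrite sqrtC_ge0 ler0n.
by rewrite geC0_conj ?invr_ge0 // -invfM -expr2 sqrtCK.
Qed.

Lemma dicke_mixE lam x y : dicke_mix lam x y =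
  if wt x == wt y then lam (inord (wt x)) / 'C(n, wt x)%:R else 0.
Proof.
rewrite /dicke_mix (bigD1 (inord (wt x))) //= big1 ?addr0.
  rewrite dicke_mul_conj inordK ?ltnS ?wt_le // eqxx /= eq_sym.
  by case: eqP => _; rewrite ?mulr0.
move=> i i_neq; rewrite dicke_mul_conj; case: (eqVneq (wt x) i) => [wi|] /=.
  by move: i_neq; rewrite wi inord_val eqxx.
by rewrite mulr0.
Qed.

Lemma dicke_mix_diag lam x : dicke_mix lam x x = lam (inord (wt x)) / 'C(n, wt x)%:R.
Proof. by rewrite dicke_mixE eqxx. Qed.

Lemma dicke_mix_wt lam x x' y y' : wt x = wt x' -> wt y = wt y' ->
  dicke_mix lam x y = dicke_mix lam x' y'.
Proof. by move=> xx' yy'; rewrite !dicke_mixE xx' yy'. Qed.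

Definition dicke_coef (v : BS n -> C) (i : 'I_n.+1) := \sum_y (dicke C i y)^* * v y.

Lemma qform_dicke_mix lam v :
  qform (dicke_mix lam) v v = \sum_i lam i * ((dicke_coef v i)^* * dicke_coef v i).
Proof.
rewrite /qform.
transitivity (\sum_x \sum_y \sum_i lam i * ((v x)^* * dicke C i x * ((dicke C i y)^* * v y))).
  apply: eq_bigr => x _; apply: eq_bigr => y _.
  by rewrite /dicke_mix mulr_sumr mulr_suml; apply: eq_bigr => i _; ring.
under eq_bigr do rewrite exchange_big /=.
rewrite exchange_big /=; apply: eq_bigr => i _.
under eq_bigr do rewrite -mulr_sumr. rewrite -mulr_sumr; congr (_ * _).
rewrite /dicke_coef rmorph_sum mulr_suml; apply: eq_bigr => x _.
rewrite mulr_sumr; apply: eq_bigr => y _.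
by rewrite rmorphM /= conjCK (mulrC (dicke C i x)).
Qed.

Section NonnegativeWeights.
Variable lam : 'I_n.+1 -> C.
Hypothesis lam_ge0 : forall i, 0 <= lam i.

Lemma dicke_mix_ge0 x y : 0 <= dicke_mix lam x y.
Proof. by rewrite dicke_mixE; case: eqP => // _; rewrite divr_ge0 ?ler0n. Qed.

Lemma dicke_mix_hermitian : Defs.hermitian (dicke_mix lam).
Proof.
by move=> x y; rewrite geC0_conj ?dicke_mix_ge0 // !dicke_mixE eq_sym; case: eqP => // ->.
Qed.

Lemma dicke_mix_psd : psd (dicke_mix lam).
Proof.
move=> v; rewrite -/(qform _ _ _) qform_dicke_mix; apply: sumr_ge0 => i _.
by rewrite mulr_ge0 // mulrC mul_conjC_ge0.
Qed.

End NonnegativeWeights.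

Lemma dicke_mix_trace lam : \sum_x dicke_mix lam x x = \sum_i lam i.
Proof.
rewrite (partition_big (fun x : BS n => (inord (wt x) : 'I_n.+1)) xpredT) //=.
apply: eq_bigr => i _.
have wt_inord x : (inord (wt x) == i) = (wt x == i).
  by rewrite -(inj_eq val_inj) /= inordK // ltnS wt_le.
transitivity (\sum_(x in [set x : BS n | wt x == i]) lam i / 'C(n, i)%:R).
  apply: eq_big => x; first by rewrite inE wt_inord.
  by rewrite wt_inord dicke_mix_diag => /eqP ->; rewrite inord_val.
rewrite sumr_const card_wt -[_ *+ 'C(n, i)]mulr_natr divfK //; apply: binomial_neq0.
by rewrite -ltnS.
Qed.

End DickeMixtures.

Section Marginals.
Variables (C : numClosedFieldType) (n : nat).
Implicit Types (X rho sigma : op C (BS n)) (x y : BS n).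

Lemma ptrace_setT X x y : ptrace (S := setT) X (restr_in setT x) (restr_in setT y) = X x y.
Proof.
have glueT u (c : cfg_out setT) : glue (restr_in setT u) c = u.
  by apply/ffunP=> i; rewrite (glue_in _ _ (in_setT i)) ffunE.
have card_out : #|{: cfg_out [set: 'I_n]}| = 1%N.
  by rewrite card_ffun card_sig (eq_card0 (A := [pred i | i \in ~: setT])) // => i; rewrite !inE.
by rewrite /ptrace (eq_bigr (fun=> X x y)) => [|c _]; rewrite ?sumr_const ?card_out ?glueT.
Qed.

Lemma determines_setT rho : determines rho [set setT].
Proof.
move=> sigma _ marg x y.
by have := marg setT (set11 _) (restr_in setT x) (restr_in setT y); rewrite !ptrace_setT.
Qed.

Lemma maxsize_setT : maxsize [set [set: 'I_n]] = n.
Proof. by rewrite /maxsize big_set1 cardsT card_ord. Qed.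

Lemma ptrace_setC1 X q x y : x q = y q ->
  ptrace (S := [set~ q]) X (restr_in [set~ q] x) (restr_in [set~ q] y)
  = X x y + X (flip q x) (flip q y).
Proof.
move=> xy; set S := [set~ q].
have qS : q \notin S by rewrite !inE eqxx.
have qS' : q \in ~: S by rewrite inE.
pose k0 : sub_out S := exist _ q qS'.
have out_q (k : sub_out S) : k = k0.
  by apply: val_inj; case: k => i /=; rewrite !inE negbK => /eqP.
set c0 := restr_out S x.
have out_cfg (c : cfg_out S) : (c == c0) || (c == flip_out q c0).
  apply/orP; case: (eqVneq (c k0) (c0 k0)) => ck0; [left | right];
    apply/eqP/ffunP=> k; rewrite (out_q k) // ffunE /= eqxx.
  by move: ck0; case: (c k0); case: (c0 k0).
have c0_flip : flip_out q c0 != c0.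
  by apply/eqP=> /ffunP/(_ k0); rewrite ffunE /= eqxx; case: (c0 k0).
rewrite /ptrace (bigD1 c0) //= (bigD1 (flip_out q c0)) ?c0_flip //= big1 ?addr0; last first.
  by move=> c /andP[c1 c2]; move: (out_cfg c); rewrite (negbTE c1) (negbTE c2).
have glue_x : glue (restr_in S x) c0 = x by rewrite glue_restr.
have glue_y : glue (restr_in S y) c0 = y.
  by rewrite glue_restr // => i; rewrite !inE negbK => /eqP ->.
by rewrite !glue_flip_out // glue_x glue_y.
Qed.

Lemma maxsize_setC1 : (maxsize [set [set~ q] | q : 'I_n] <= n.-1)%N.
Proof. by apply/bigmax_leqP => S /imsetP[q _ ->]; rewrite cardsC1 card_ord. Qed.

Definition flip_antisym X :=
  forall q (u v : BS n), u q = v q -> X (flip q u) (flip q v) = - X u v.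

Lemma flip_antisymZ X t : flip_antisym X -> flip_antisym (fun x y => t * X x y).
Proof. by move=> hX q u v uv; rewrite hX // mulrN. Qed.

Lemma ptrace_flip_antisym X (S : {set 'I_n}) q : flip_antisym X -> q \notin S ->
  forall a b, ptrace (S := S) X a b = 0.
Proof.
move=> hX qS a b; rewrite /ptrace; apply: (sum_involution_opp (@flip_outK _ S q)) => c /=.
by rewrite !glue_flip_out // hX // (glue_at_out a b c qS).
Qed.

Lemma trace_flip_antisym X : (0 < n)%N -> flip_antisym X -> \sum_x X x x = 0.
Proof.
by move=> n_gt0 hX; apply: (sum_involution_opp (flipK (Ordinal n_gt0))) => x; apply: hX.
Qed.

Lemma maxsize_ge_of_flip_antisym rho sigma X x0 y0 :
  density rho -> Defs.hermitian sigma -> psd sigma ->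
  (forall x y, sigma x y = rho x y + X x y) -> flip_antisym X -> X x0 y0 != 0 ->
  forall Sc, determines rho Sc -> (n <= maxsize Sc)%N.
Proof.
move=> [_ _ trace_rho] hsigma psigma sigmaE hX X0 Sc detSc.
have [n0|n_gt0] := posnP n; first by rewrite {1}n0.
rewrite leqNgt; apply/negP => small.
have dsigma : density sigma.
  split=> //; under eq_bigr do rewrite sigmaE.
  by rewrite big_split /= (trace_flip_antisym n_gt0 hX) addr0.
have marg S : S \in Sc -> op_eq (ptrace (S := S) sigma) (ptrace (S := S) rho).
  move=> SSc a b.
  have /properP[_ [q _ qS]] : S \proper setT.
    rewrite properT; apply: contraTneq small => S_T.
    by rewrite -leqNgt (leq_trans _ (leq_bigmax_cond _ SSc)) // S_T cardsT card_ord.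
  have := ptrace_flip_antisym hX qS a b; rewrite /ptrace => X_marg.
  by under eq_bigr do rewrite sigmaE; rewrite big_split /= X_marg addr0.
have /eqP := detSc sigma dsigma marg x0 y0.
by rewrite sigmaE -subr_eq0 addrC addKr (negbTE X0).
Qed.

End Marginals.

Section LowerBounds.
Variables (C : numClosedFieldType) (n : nat).
Implicit Types (x y : BS n).

(* [parity_op = \sum_i (-1)^i C(n, i) |D_n^i><D_n^i|] *)
Definition parity_op : op C (BS n) :=
  fun x y => if wt x == wt y then (-1) ^+ wt x else 0.

Let z0 := const_bits n false.
Let z1 := const_bits n true.

Definition corner_op : op C (BS n) :=
  fun x y => ((x == z0) && (y == z1))%:R + ((x == z1) && (y == z0))%:R.

Lemma flip_antisym_parity_op : flip_antisym parity_op.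
Proof.
move=> q u v uv; rewrite /parity_op eq_wt_flip //; case: eqP => _; last by rewrite oppr0.
by rewrite -signr_odd odd_wt_flip signrN signr_odd.
Qed.

Lemma corner_op_eq0 (q : 'I_n) (u v : BS n) : u q = v q -> corner_op u v = 0.
Proof.
move=> uv; rewrite /corner_op.
have ends b : (u == const_bits n b) && (v == const_bits n (~~ b)) = false.
  apply/negP => /andP[/eqP uE /eqP vE]; by move: uv; rewrite uE vE !ffunE; case: (b).
by rewrite (ends false) (ends true) addr0.
Qed.

Lemma flip_antisym_corner_op : flip_antisym corner_op.
Proof.
move=> q u v uv; rewrite (corner_op_eq0 uv) (@corner_op_eq0 q) ?oppr0 //.
by rewrite !flip_at uv.
Qed.

Lemma corner_op_hermitian : Defs.hermitian corner_op.
Proof.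
by move=> x y; rewrite /corner_op rmorphD /= !conjC_nat addrC andbC [in X in _ + X]andbC.
Qed.

Lemma qform_corner_op v : qform corner_op v v = (v z0)^* * v z1 + (v z1)^* * v z0.
Proof.
rewrite /qform.
transitivity (\sum_a ((v a)^* * v z1 * (a == z0)%:R + (v a)^* * v z0 * (a == z1)%:R)).
  apply: eq_bigr => a _.
  transitivity (\sum_b ((v a)^* * (a == z0)%:R * v b * (b == z1)%:R
                       + (v a)^* * (a == z1)%:R * v b * (b == z0)%:R)).
    by apply: eq_bigr => b _; rewrite /corner_op -!mulnb !natrM; ring.
  by rewrite big_split /= !sum_mul_delta; ring.
by rewrite big_split /= !sum_mul_delta.
Qed.

Lemma dicke_coef_ord0 (v : BS n -> C) : dicke_coef v ord0 = v z0.
Proof.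
rewrite /dicke_coef (eq_bigr (fun y => v y * (y == z0)%:R)) ?sum_mul_delta // => y _.
rewrite /dicke /= wt_eq0 bin0 sqrtC1 invr1.
by case: eqP => _; rewrite ?conjC1 ?conjC0 mulrC.
Qed.

Lemma dicke_coef_ord_max (v : BS n -> C) : dicke_coef v ord_max = v z1.
Proof.
rewrite /dicke_coef (eq_bigr (fun y => v y * (y == z1)%:R)) ?sum_mul_delta // => y _.
rewrite /dicke /= wt_eqn binn sqrtC1 invr1.
by case: eqP => _; rewrite ?conjC1 ?conjC0 mulrC.
Qed.

Variable lam : 'I_n.+1 -> C.
Hypothesis lam_ge0 : forall i, 0 <= lam i.
Hypothesis lam_sum : \sum_i lam i = 1.
Let rho := dicke_mix lam.

Lemma lam_le1 i : lam i <= 1.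
Proof. by rewrite -lam_sum (bigD1 i) //= lerDl sumr_ge0. Qed.

Lemma dicke_mix_density : density rho.
Proof.
by split; [exact: dicke_mix_hermitian | exact: dicke_mix_psd | rewrite dicke_mix_trace].
Qed.

Lemma dicke_mix_add_parity_op t x y :
  dicke_mix (fun i => lam i + t * (-1) ^+ i * 'C(n, i)%:R) x y = rho x y + t * parity_op x y.
Proof.
rewrite /rho !dicke_mixE /parity_op; case: eqP => _; last by rewrite mulr0 addr0.
by rewrite inordK ?ltnS ?wt_le //; field; apply: binomial_neq0; apply: wt_le.
Qed.

Definition parity_shift (e : bool) : C :=
  (-1) ^+ (~~ e) * (\prod_(j : 'I_n.+1 | odd j == e) lam j) / n`!%:R.

Lemma parity_shift_ge0 e i : 0 <= lam i + parity_shift e * (-1) ^+ i * 'C(n, i)%:R.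
Proof.
pose P := \prod_(j : 'I_n.+1 | odd j == e) lam j; pose w : C := 'C(n, i)%:R / n`!%:R.
have P_ge0 : 0 <= P by apply: prodr_ge0.
have fact_pos : (0 : C) < n`!%:R by rewrite ltr0n fact_gt0.
have w_ge0 : 0 <= w by rewrite divr_ge0 ?ler0n.
have w_le1 : w <= 1.
  rewrite ler_pdivrMr // mul1r ler_nat -(bin_fact (valP i : (i <= n)%N)).
  by rewrite leq_pmulr // muln_gt0 !fact_gt0.
have -> : lam i + parity_shift e * (-1) ^+ i * 'C(n, i)%:R
    = lam i + (-1) ^+ (~~ e + i)%N * (P * w).
  by rewrite exprD /parity_shift /w /P; ring.
rewrite -signr_odd oddD oddb; case: (eqVneq (odd i) e) => [ie|ie].
  rewrite -ie addNb addbb expr1 mulN1r subr_ge0 (le_trans (ler_piMr P_ge0 w_le1)) //.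
  have rest_le1 : \prod_(j : 'I_n.+1 | (odd j == e) && (j != i)) lam j <= 1.
    by apply: prodr_ile1 => j _; rewrite lam_ge0 lam_le1.
  by rewrite /P (bigD1 i) ?ie //= ler_piMr.
have -> : odd i = ~~ e by move: ie; case: (odd i); case: (e).
by rewrite addbb expr0 mul1r addr_ge0 // mulr_ge0.
Qed.

Lemma parity_lower_bound e : (forall i : 'I_n.+1, odd i = e -> lam i != 0) ->
  forall Sc, determines rho Sc -> (n <= maxsize Sc)%N.
Proof.
move=> lam_nz.
pose mu i := lam i + parity_shift e * (-1) ^+ i * 'C(n, i)%:R.
apply: (@maxsize_ge_of_flip_antisym _ _ rho (dicke_mix mu)
  (fun x y => parity_shift e * parity_op x y) z0 z0).
- exact: dicke_mix_density.
- exact/dicke_mix_hermitian/parity_shift_ge0.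
- exact/dicke_mix_psd/parity_shift_ge0.
- exact: dicke_mix_add_parity_op.
- exact/flip_antisymZ/flip_antisym_parity_op.
rewrite /parity_op eqxx mulf_neq0 ?signr_eq0 // /parity_shift.
rewrite !mulf_neq0 ?signr_eq0 ?invr_eq0 ?pnatr_eq0 -?lt0n ?fact_gt0 //.
by apply/prodf_neq0 => i /eqP; apply: lam_nz.
Qed.

Lemma psd_dicke_mix_add_corner : (0 < n)%N ->
  psd (fun x y => rho x y + lam ord0 * lam ord_max * corner_op x y).
Proof.
move=> n_gt0 v; rewrite -/(qform _ _ _) qform_add_scale qform_corner_op /rho qform_dicke_mix.
rewrite (bigD1 ord0) // (bigD1 ord_max) /=; last by rewrite -(inj_eq val_inj) /= -lt0n.
rewrite dicke_coef_ord0 dicke_coef_ord_max.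
set R := \sum_(i | _) _; set a := v z0; set b := v z1.
have norm_ge0 (z : C) : 0 <= z^* * z by rewrite mulrC mul_conjC_ge0.
have R_ge0 : 0 <= R by apply: sumr_ge0 => i _; rewrite mulr_ge0.
have -> : lam ord0 * (a^* * a) + (lam ord_max * (b^* * b) + R)
      + lam ord0 * lam ord_max * (a^* * b + b^* * a)
    = lam ord0 * (1 - lam ord_max) * (a^* * a) + lam ord_max * (1 - lam ord0) * (b^* * b)
      + lam ord0 * lam ord_max * ((a + b)^* * (a + b)) + R.
  by rewrite rmorphD /=; ring.
have lam0_le1 : 0 <= 1 - lam ord0 by rewrite subr_ge0 lam_le1.
have lamn_le1 : 0 <= 1 - lam ord_max by rewrite subr_ge0 lam_le1.
have := mulr_ge0 (mulr_ge0 (lam_ge0 ord0) lamn_le1) (norm_ge0 a).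
have := mulr_ge0 (mulr_ge0 (lam_ge0 ord_max) lam0_le1) (norm_ge0 b).
have := mulr_ge0 (mulr_ge0 (lam_ge0 ord0) (lam_ge0 ord_max)) (norm_ge0 (a + b)).
by move=> *; rewrite !addr_ge0.
Qed.

Lemma ends_lower_bound : lam ord0 * lam ord_max != 0 ->
  forall Sc, determines rho Sc -> (n <= maxsize Sc)%N.
Proof.
move=> ends_nz; have [n0|n_gt0] := posnP n; first by move=> *; rewrite {1}n0.
have z01 : z0 != z1 by apply/eqP=> /ffunP/(_ (Ordinal n_gt0)); rewrite !ffunE.
set t := lam ord0 * lam ord_max; have t_ge0 : 0 <= t by rewrite mulr_ge0.
apply: (@maxsize_ge_of_flip_antisym _ _ rho (fun x y => rho x y + t * corner_op x y)
  (fun x y => t * corner_op x y) z0 z1).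
- exact: dicke_mix_density.
- move=> x y; rewrite rmorphD rmorphM /= (geC0_conj t_ge0) -corner_op_hermitian.
  by rewrite -(dicke_mix_hermitian lam_ge0).
- exact: psd_dicke_mix_add_corner.
- by [].
- exact/flip_antisymZ/flip_antisym_corner_op.
by rewrite /corner_op !eqxx /= (negbTE z01) addr0 mulr1.
Qed.

End LowerBounds.

Section CodimOneMarginals.
Variables (C : numClosedFieldType) (n : nat) (lam : 'I_n.+1 -> C).
Hypothesis lam_ge0 : forall i, 0 <= lam i.
Variable sigma : op C (BS n).
Hypothesis sigma_density : density sigma.
Implicit Types (x y : BS n).
Let rho := dicke_mix lam.
(* pointwise form of [ptrace [set~ q] sigma = ptrace [set~ q] rho] *)
Hypothesis marginal_eq : forall q x y, x q = y q ->
  sigma x y + sigma (flip q x) (flip q y) = rho x y + rho (flip q x) (flip q y).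

Let D x y := sigma x y - rho x y.

Let sigma_hermitian : Defs.hermitian sigma. Proof. by case: sigma_density. Qed.
Let sigma_psd : psd sigma. Proof. by case: sigma_density. Qed.

Lemma D_hermitian x y : D y x = (D x y)^*.
Proof. by rewrite /D rmorphB /= -sigma_hermitian -(dicke_mix_hermitian lam_ge0). Qed.

Lemma D_flip q x y : x q = y q -> D (flip q x) (flip q y) = - D x y.
Proof.
move=> /marginal_eq sum_eq; rewrite /D.
have -> : sigma (flip q x) (flip q y) = rho x y + rho (flip q x) (flip q y) - sigma x y.
  by rewrite -sum_eq; ring.
by ring.
Qed.

Lemma D_diag_sign x : D x x = (-1) ^+ wt x * D (const_bits n false) (const_bits n false).
Proof.
have [k] := ubnP (wt x); elim: k x => // k IH x wt_lt.
have [-> | [q]] := const_bitsP false x.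
  by rewrite wt_const_bits expr0 mul1r.
rewrite eqbF_neg negbK => xq.
have := D_flip (erefl (flip q x q)); rewrite flipK => ->.
have wt_fx : wt (flip q x) = (wt x).-1 by rewrite wt_flip xq.
rewrite IH ?wt_fx; last by have := wt_gt0 xq; lia.
by rewrite -{2}(prednK (wt_gt0 xq)) exprS; ring.
Qed.

Variables (a b : 'I_n.+1).
Hypotheses (a_odd : odd a) (lam_a : lam a = 0) (b_even : ~~ odd b) (lam_b : lam b = 0).

(* [sigma] is nonnegative on the diagonal at weights [a] and [b], where [rho] vanishes. *)
Lemma D_diag x : D x x = 0.
Proof.
have sign_ge0 (k : 'I_n.+1) : lam k = 0 ->
    0 <= (-1) ^+ k * D (const_bits n false) (const_bits n false).
  move=> lam_k; have [y wt_y] := exists_wt (ltn_ord k : (k <= n)%N).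
  rewrite -wt_y -D_diag_sign /D /rho dicke_mix_diag wt_y inord_val lam_k mul0r subr0.
  exact: psd_diag.
have := sign_ge0 a lam_a; have := sign_ge0 b lam_b.
rewrite -(signr_odd _ a) -(signr_odd _ b) a_odd (negbTE b_even) expr0 expr1.
rewrite mul1r mulN1r oppr_ge0 => D0_ge0 D0_le0.
have D0 : D (const_bits n false) (const_bits n false) = 0.
  by apply: le_anti; rewrite D0_le0 D0_ge0.
by rewrite D_diag_sign D0 mulr0.
Qed.

Lemma D_row0 x : lam (inord (wt x)) = 0 -> forall y, D x y = 0 /\ D y x = 0.
Proof.
move=> lam_x.
have sigma_xx : qform sigma (fun z => (z == x)%:R) (fun z => (z == x)%:R) = 0.
  by have := D_diag x; rewrite qform_delta /D /rho dicke_mix_diag lam_x mul0r subr0.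
have col0 y : D y x = 0.
  have := psd_qform_eq0 sigma_hermitian sigma_psd sigma_xx y; rewrite sum_mul_delta /D => ->.
  by rewrite /rho dicke_mixE; case: eqP => [->|]; rewrite ?lam_x ?mul0r subr0.
by move=> y; rewrite (D_hermitian y x) col0 conjC0.
Qed.

Lemma qform_pair x x' : x != x' -> wt x = wt x' ->
  qform sigma (fun z => (z == x)%:R - (z == x')%:R) (fun z => (z == x)%:R - (z == x')%:R)
  = - (D x x' + D x' x).
Proof.
move=> xx' wt_xx'; rewrite qform_diff //.
have sigmaE v w : sigma v w = rho v w + D v w by rewrite /D; ring.
have rhoE v w : wt v = wt x -> wt w = wt x -> rho v w = rho x x by apply: dicke_mix_wt.
have wt_x'x := esym wt_xx'.
rewrite (sigmaE x x) (sigmaE x' x') (sigmaE x x') (sigmaE x' x) !D_diag.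
by rewrite (rhoE x' x') ?(rhoE x x') ?(rhoE x' x) //; ring.
Qed.

(* The two pairs [x, x'] and [flip q x, flip q x'] give opposite values of the form. *)
Lemma D_swap p r q x : q != p -> q != r -> x p != x r ->
  forall y, D (swap_bits p r x) y = D x y.
Proof.
move=> qp qr xpr y; set x' := swap_bits p r x.
have xx' : x != x' by rewrite eq_sym swap_bits_neq.
have wt_xx' : wt x = wt x' by rewrite wt_swap_bits.
have fx_fx' : flip q x != flip q x'.
  rewrite /x' -swap_bits_flip // eq_sym swap_bits_neq // !ffunE.
  by rewrite ![_ == q]eq_sym (negbTE qp) (negbTE qr).
have wt_fx_fx' : wt (flip q x) = wt (flip q x').
  by rewrite /x' -swap_bits_flip // wt_swap_bits.
have x_x'_q : x q = x' q by rewrite /x' swap_bits_at.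
have := sigma_psd (fun z => (z == x)%:R - (z == x')%:R).
rewrite -/(qform _ _ _) qform_pair // oppr_ge0 => sum_le0.
have := sigma_psd (fun z => (z == flip q x)%:R - (z == flip q x')%:R).
rewrite -/(qform _ _ _) qform_pair // (D_flip x_x'_q) (D_flip (esym x_x'_q)) -opprD opprK.
move=> sum_ge0; have sum0 : D x x' + D x' x = 0 by apply: le_anti; rewrite sum_le0.
have pair0 : qform sigma (fun z => (z == x)%:R - (z == x')%:R)
    (fun z => (z == x)%:R - (z == x')%:R) = 0 by rewrite qform_pair // sum0 oppr0.
have := psd_qform_eq0 sigma_hermitian sigma_psd pair0 y.
under eq_bigr do rewrite mulrBr; rewrite sumrB !sum_mul_delta => /eqP; rewrite subr_eq0 => /eqP col.
rewrite (D_hermitian y x') (D_hermitian y x) /D col.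
by rewrite /rho (dicke_mix_wt lam (erefl (wt y)) wt_xx').
Qed.

Lemma D_eq0_of_le2 p r x : (n <= 2)%N -> x p != x r -> forall y, D x y = 0.
Proof.
move=> n_le2 xpr y.
have a1 : a = 1%N :> nat.
  have a_le2 : (a <= 2)%N by move: (ltn_ord a); lia.
  by move: a_odd a_le2; case: (nat_of_ord a) => [|[|[|k]]].
have /andP[wt_gt0 wt_lt] := wt_nonconst xpr.
have wt_x : wt x = 1%N by lia.
have lam_x : lam (inord (wt x)) = 0.
  by rewrite wt_x (_ : inord 1 = a) //; apply: ord_inj; rewrite a1 inordK //; lia.
by case: (D_row0 lam_x y).
Qed.

Variable c : bool.
Hypothesis lam_const : lam (inord (wt (const_bits n c))) = 0.

Lemma D_eq0 x y : D x y = 0.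
Proof.
have [N] := ubnP (dist_const c x + dist_const c y); elim: N x y => // N IH x y dist_lt.
have flip_step x' q : dist_const c x' = dist_const c x -> x' q != c -> y q != c -> D x' y = 0.
  move=> dist_x' x'q yq.
  have fx_fy : flip q x' q = flip q y q.
    by rewrite !flip_at; move: x'q yq; case: (x' q); case: (y q); case: (c).
  rewrite -(flipK q x') -(flipK q y) (D_flip fx_fy) IH ?oppr0 // !dist_const_flip //.
  by have := dist_const_gt0 x'q; have := dist_const_gt0 yq; rewrite dist_x'; lia.
have [-> | [p xp]] := const_bitsP c x; first by case: (D_row0 lam_const y).
have [-> | [r yr]] := const_bitsP c y; first by case: (D_row0 lam_const x).
have [yp | /negbNE/eqP yp] := boolP (y p != c); first exact: flip_step xp yp.
have [xr | /negbNE/eqP xr] := boolP (x r != c); first exact: flip_step xr yr.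
have xpr : x p != x r by rewrite xr.
have [q /andP[qp qr] | only_pr] := pickP [pred q | (q != p) && (q != r)].
  rewrite -(D_swap qp qr xpr) (flip_step _ r) ?dist_const_swap_bits ?swap_bitsR //.
apply: (D_eq0_of_le2 _ xpr).
have cover : [set: 'I_n] \subset [set p; r].
  apply/subsetP => i _; move: (only_pr i) => /= /negbT; rewrite negb_and !negbK !inE.
  by case/orP=> ->; rewrite ?orbT.
have := subset_leq_card cover; rewrite cardsT card_ord cards2 => /leq_trans; apply.
by case: (p != r).
Qed.

End CodimOneMarginals.

Lemma determines_setC1 (C : numClosedFieldType) n (lam : 'I_n.+1 -> C) (a b : 'I_n.+1) :
  (forall i, 0 <= lam i) -> odd a -> lam a = 0 -> ~~ odd b -> lam b = 0 ->
  lam ord0 * lam ord_max = 0 -> determines (dicke_mix lam) [set [set~ q] | q : 'I_n].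
Proof.
move=> lam_ge0 a_odd lam_a b_even lam_b /eqP; rewrite mulf_eq0 => ends0.
move=> sigma dsigma marg x y.
have marg_eq (q : 'I_n) (u v : BS n) : u q = v q -> sigma u v + sigma (flip q u) (flip q v)
    = dicke_mix lam u v + dicke_mix lam (flip q u) (flip q v).
  by move=> uv; rewrite -!ptrace_setC1 //; apply: marg; exact: imset_f.
have [c lam_c] : exists c, lam (inord (wt (const_bits n c))) = 0.
  case/orP: ends0 => /eqP lam0; [exists false | exists true];
    by rewrite wt_const_bits -lam0; congr lam; apply: val_inj; rewrite /= inordK.
apply/eqP; rewrite -subr_eq0; apply/eqP.
exact: (D_eq0 lam_ge0 dsigma marg_eq a_odd lam_a b_even lam_b lam_c).
Qed.

Unset Implicit Arguments.

Theorem mainTheorem19 (C : numClosedFieldType) (n : nat) (hn : (2 <= n)%N)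
  (lam : 'I_n.+1 -> C) (hpos : forall i, 0 <= lam i)
  (hsum : \sum_(i < n.+1) lam i = 1) :
  is_L (dicke_mix lam) n <->
  [\/ lam ord0 * lam ord_max != 0,
      (forall i : 'I_n.+1, odd i -> lam i != 0)
    | (forall i : 'I_n.+1, ~~ odd i -> lam i != 0)].
Proof.
split=> [[_ L_min] | cond].
  have [ends0 | ends_nz] := eqVneq (lam ord0 * lam ord_max) 0; last exact: Or31.
  have [odd_nz | [a a_odd /negPn/eqP lam_a]] :=
    all_or_exists (fun i : 'I_n.+1 => odd i) (fun i => lam i != 0); first exact: Or32.
  have [even_nz | [b b_even /negPn/eqP lam_b]] :=
    all_or_exists (fun i : 'I_n.+1 => ~~ odd i) (fun i => lam i != 0); first exact: Or33.
  have := L_min _ (determines_setC1 hpos a_odd lam_a b_even lam_b ends0).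
  by move/leq_trans/(_ (maxsize_setC1 n)); rewrite leqNgt ltn_predL (ltnW hn).
split; first by exists [set setT]; split; [exact: determines_setT | exact: maxsize_setT].
case: cond => [ends_nz | odd_nz | even_nz].
- exact: ends_lower_bound hpos hsum ends_nz.
- by apply: (parity_lower_bound hpos hsum (e := true)) => i /odd_nz.
- by apply: (parity_lower_bound hpos hsum (e := false)) => i /negbT/even_nz.
Qed.
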